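(* Let $f:\mathbb R^n\to\mathbb R$ be continuously differentiable and let $\{x^k\}$ be generated by $x^{k+1}=x^k+t_kd^k$ with $t_k\ge0$. Suppose $\inf_k f(x^k)>-\infty$ and: (a) $f$ satisfies the $L$-descent condition for some $L>0$; (b) $\{d^k\}$ is gradient associated with $\{x^k\}$ and satisfies the sufficient descent condition $\langle\nabla f(x^k),d^k\rangle\le-\kappa\|d^k\|^2$ for all $k\in\mathbb N$, for some $\kappa>0$; (c) $\sum_{k=1}^\infty t_k=\infty$ and there are $\delta\in(0,2\kappa)$ and $N\in\mathbb N$ with $t_k\le \frac{2\kappa-\delta}{L}$ for all $k\ge N$. Then every accumulation point of $\{x^k\}$ is a stationary point of $f$; if $\{x^k\}$ is bounded then its set of accumulation points is nonempty, compact and connected; and if $\{x^k\}$ has an isolated accumulation point then $\{x^k\}$ converges to it. Moreover, if $\{t_k\}$ is bounded away from $0$, then $\nabla f(x^k)\to0$ as $k\to\infty$.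
   Context: $f$ satisfies the $L$-descent condition if $f(y)\le f(x)+\langle\nabla f(x),y-x\rangle+\frac L2\|y-x\|^2$ for all $x,y\in\mathbb R^n$. A direction sequence $\{d^k\}$ is called gradient associated with $\{x^k\}$ if for every infinite set $J\subset\mathbb N$, $d^k\to0$ along $J$ implies $\nabla f(x^k)\to 0$ along $J$. *)

(* R^n is 'rV[R]_n (its library topology is the
   product topology, which is the Euclidean one); the Euclidean inner
   product and norm are defined explicitly below. *)
From HB Require Import structures.
From mathcomp Require Import all_boot all_order all_algebra.
From mathcomp Require Import all_classical all_reals all_analysis.
Set Implicit Arguments. Unset Strict Implicit. Unset Printing Implicit Defensive.
Import Order.TTheory GRing.Theory Num.Theory.
Import numFieldNormedType.Exports.
Local Open Scope classical_set_scope.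
Local Open Scope ring_scope.

Definition dotp (R : realType) (n : nat) (u v : 'rV[R]_n) : R :=
  \sum_(i < n) u ord0 i * v ord0 i.

Definition enorm (R : realType) (n : nat) (u : 'rV[R]_n) : R :=
  Num.sqrt (dotp u u).

Definition grad (R : realType) (n : nat) (f : 'rV[R]_n -> R) (x : 'rV[R]_n)
  : 'rV[R]_n := \row_(i < n) ('d f x (delta_mx ord0 i : 'rV[R]_n)).

Definition C1 (R : realType) (n : nat) (f : 'rV[R]_n -> R) : Prop :=
  (forall x, differentiable f x) /\ continuous (grad f).

Definition L_descent (R : realType) (n : nat) (f : 'rV[R]_n -> R) (L : R) :=
  forall x y : 'rV[R]_n,
    f y <= f x + dotp (grad f x) (y - x) + L / 2 * enorm (y - x) ^+ 2.

Definition cvg0_along (R : realType) (n : nat) (J : set nat)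
  (u : nat -> 'rV[R]_n) : Prop :=
  forall e : R, 0 < e -> exists N : nat,
    forall k, J k -> (N <= k)%N -> enorm (u k) < e.

Definition gradient_associated (R : realType) (n : nat) (f : 'rV[R]_n -> R)
  (x d : nat -> 'rV[R]_n) : Prop :=
  forall J : set nat, ~ finite_set J ->
    cvg0_along J d -> cvg0_along J (fun k => grad f (x k)).

Definition isolated_in (R : realType) (n : nat) (A : set 'rV[R]_n)
  (p : 'rV[R]_n) : Prop :=
  A p /\ exists U, nbhs p U /\ A `&` U = [set p].

From HB Require Import structures.
From mathcomp Require Import all_boot all_order all_algebra.
From mathcomp Require Import all_classical all_reals all_analysis.
Import Order.TTheory GRing.Theory Num.Theory.
Import numFieldNormedType.Exports.
Local Open Scope classical_set_scope.
Local Open Scope ring_scope.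
From mathcomp Require Import ring lra.

(* Under the step-size bound, the L-descent inequality gives the sufficient decrease
   f(x_{k+1}) <= f(x_k) - delta/2 * t_k |d_k|^2, so sum_k t_k |d_k|^2 < oo because f is
   bounded below along the iterates; as t_k is eventually bounded, the steps
   x_{k+1} - x_k = t_k d_k tend to 0.  If grad f(p) <> 0 at a cluster point p, then grad f
   stays away from 0 near p and gradient association forces |d_k| >= c > 0 while x_k is
   near p.  There t_k |d_k| <= t_k |d_k|^2 / c, so iterates that come close to p late
   enough never leave a neighbourhood of p, and c^2 * sum t_k <= sum t_k |d_k|^2 < oo
   contradicts sum t_k = oo.  The shape of the cluster set only needs vanishing steps
   (Ostrowski): a bounded such sequence has a nonempty compact connected cluster set, and
   the sequence converges to any isolated cluster point.  If t_k >= tau > 0, summability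
   forces d_k -> 0, and gradient association gives grad f(x_k) -> 0. *)

Section Euclidean.
Context {R : realType} {n : nat}.
Implicit Types u v : 'rV[R]_n.

Lemma dotp_ge0 u : 0 <= dotp u u.
Proof. by apply: sumr_ge0 => i _; rewrite -expr2 sqr_ge0. Qed.

Lemma enorm_ge0 u : 0 <= enorm u.
Proof. exact: sqrtr_ge0. Qed.

Lemma enorm_sqr u : enorm u ^+ 2 = dotp u u.
Proof. by rewrite /enorm sqr_sqrtr // dotp_ge0. Qed.

Lemma dotpZr a u v : dotp u (a *: v) = a * dotp u v.
Proof. by rewrite /dotp mulr_sumr; apply: eq_bigr => i _; rewrite mxE; ring. Qed.

Lemma enormZ_sqr a u : enorm (a *: u) ^+ 2 = a ^+ 2 * enorm u ^+ 2.
Proof.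
rewrite !enorm_sqr /dotp mulr_sumr.
by apply: eq_bigr => i _; rewrite !mxE; ring.
Qed.

Lemma coord_le_enorm u i : `|u ord0 i| <= enorm u.
Proof.
rewrite -(sqrtr_sqr (u ord0 i)) /enorm ler_wsqrtr // /dotp (bigD1 i) //=.
by rewrite -expr2 lerDl; apply: sumr_ge0 => j _; rewrite -expr2 sqr_ge0.
Qed.

(* [`|u|] is the sup norm of 'rV[R]_n, which defines its topology. *)
Lemma normr_le_enorm u : `|u| <= enorm u.
Proof.
rewrite [leLHS]/Num.norm /= mx_normrE; apply: bigmax_le; first exact: enorm_ge0.
by case=> i j _ /=; rewrite (ord1 i); exact: coord_le_enorm.
Qed.

End Euclidean.

Lemma bounded_nneg_sum_tail_lt {R : realType} {a : nat -> R} {B : R} :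
  (forall k, 0 <= a k) -> (forall K, \sum_(0 <= k < K) a k <= B) ->
  forall e, 0 < e -> exists K0, forall i j, (K0 <= i)%N -> \sum_(i <= k < j) a k < e.
Proof.
move=> a_ge0 sum_leB e e0.
pose E := [set s | exists K, s = \sum_(0 <= k < K) a k].
have supE : has_sup E.
  split; first by exists 0, 0%N; rewrite big_geq.
  by exists B => s [K ->].
have [_ [K0 ->] near_sup] := sup_adherent e0 supE.
exists K0 => i j K0i.
have [ij|ji] := leqP i j; last by rewrite big_geq // ltnW.
have sumj_le : \sum_(0 <= k < j) a k <= sup E by apply: sup_upper_bound => //; exists j.
have splitj : \sum_(0 <= k < j) a k = \sum_(0 <= k < i) a k + \sum_(i <= k < j) a k.
  by rewrite -big_cat_nat.
have spliti : \sum_(0 <= k < i) a k = \sum_(0 <= k < K0) a k + \sum_(K0 <= k < i) a k.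
  by rewrite -big_cat_nat.
have : 0 <= \sum_(K0 <= k < i) a k by apply: sumr_ge0.
lra.
Qed.

Lemma divergent_sum_tail_unbounded {R : realType} {t : nat -> R} :
  (forall k, 0 <= t k) -> (fun K => \sum_(1 <= k < K.+1) t k) @ \oo --> +oo ->
  forall i B, exists j, B < \sum_(i <= k < i + j) t k.
Proof.
move=> t_ge0 t_div i B; apply: contrapT => bounded.
have [M _ large] := (cvgryPge _).1 t_div (\sum_(0 <= k < i) t k + B + 1).
have /= sumM := large M (leqnn M).
have split0 : \sum_(0 <= k < M.+1) t k = t 0%N + \sum_(1 <= k < M.+1) t k.
  by rewrite big_ltn.
have splitM : \sum_(0 <= k < i + M.+1) t k =
    \sum_(0 <= k < M.+1) t k + \sum_(M.+1 <= k < i + M.+1) t k.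
  by rewrite -big_cat_nat // leq_addl.
have spliti : \sum_(0 <= k < i + M.+1) t k =
    \sum_(0 <= k < i) t k + \sum_(i <= k < i + M.+1) t k.
  by rewrite -big_cat_nat // leq_addr.
have : 0 <= \sum_(M.+1 <= k < i + M.+1) t k by apply: sumr_ge0.
have : \sum_(i <= k < i + M.+1) t k <= B.
  by rewrite leNgt; apply/negP => ltB; apply: bounded; exists M.+1.
have := t_ge0 0%N; lra.
Qed.

Lemma unbounded_nat_infinite (J : set nat) :
  (forall M, exists k, (M <= k)%N /\ J k) -> ~ finite_set J.
Proof.
move=> unbJ /finite_seqP [s defJ].
have [k [lt_k Jk]] := unbJ (\max_(i <- s) i).+1.
rewrite defJ /= in Jk.
have := @leq_bigmax_seq _ s xpredT (fun i => i) k Jk isT.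
by rewrite leqNgt lt_k.
Qed.

Lemma small_steps_crossing {R : realType} {h : nat -> R} {a s : R} {i j : nat} :
  (i <= j)%N -> h i < a -> a <= h j ->
  (forall k, (i <= k)%N -> `|h k.+1 - h k| < s) ->
  exists k, (i <= k)%N /\ a <= h k /\ h k < a + s.
Proof.
move=> ij hi hj small.
rewrite -(subnKC ij) in hj.
elim: (j - i)%N hj => [|m IH] hm.
  by rewrite addn0 in hm; have := lt_le_trans hi hm; rewrite ltxx.
have [le_a|lt_a] := leP a (h (i + m)%N); first exact: IH.
exists (i + m).+1; split; first by rewrite -addnS leq_addr.
rewrite addnS in hm; split => //.
have := small (i + m)%N (leq_addr m i); rewrite ltr_norml => /andP [_].
lra.
Qed.

Section SequenceTopology.
Context {R : realType} {V : normedModType R}.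
Implicit Types (y : nat -> V) (p z : V).

Lemma clusterP y p : cluster (y @ \oo) p <->
  forall e, 0 < e -> forall K, exists k, (K <= k)%N /\ `|p - y k| < e.
Proof.
split.
  move=> cl e e0 K.
  have tail_K : (y @ \oo) [set w | exists2 k, (K <= k)%N & y k = w].
    by exists K => // k /= Kk; exists k.
  have [_ [[k Kk <-] pk]] := cl _ _ tail_K (nbhsx_ballx p e e0).
  by exists k; split => //; move: pk; rewrite -ball_normE.
move=> near A B [K _ yA] /nbhs_ballP [e e0 eB].
have [k [Kk pk]] := near e e0 K.
by exists (y k); split; [exact: yA | apply: eB; rewrite -ball_normE].
Qed.

(* Bolzano-Weierstrass along the indices where [y] visits [E `&` S]. *)
Lemma compact_frequently_near {E S : set V} {y} : compact E ->
  (forall K, exists k, (K <= k)%N /\ E (y k) /\ S (y k)) ->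
  exists z, E z /\ forall e, 0 < e -> forall K,
    exists k, (K <= k)%N /\ S (y k) /\ `|z - y k| < e.
Proof.
move=> cE visits.
pose G := filter_from setT
  (fun K => y @` [set k | (K <= k)%N /\ E (y k) /\ S (y k)]).
have FG : Filter G.
  apply: filter_fromT_filter; first by exists 0%N.
  move=> i j; exists (maxn i j) => _ [k [ijk vk] <-].
  by split; exists k => //; split => //; apply: leq_trans ijk; rewrite ?leq_maxl ?leq_maxr.
have PG : ProperFilter G.
  by apply: filter_from_proper => K _; have [k [Kk vk]] := visits K; exists (y k), k.
have GE : G E by exists 0%N => // _ [k [_ [Ek _]] <-].
have [z [Ez cz]] := cE G PG GE.
exists z; split => // e e0 K.
have GK : G (y @` [set k | (K <= k)%N /\ E (y k) /\ S (y k)]) by exists K.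
have [_ [[k [Kk [_ Sk]] <-] zk]] := cz _ _ GK (nbhsx_ballx z e e0).
by exists k; split => //; split => //; move: zk; rewrite -ball_normE.
Qed.

Lemma compact_closed_disjoint_dist_gt0 {B Q : set V} : compact B -> closed Q ->
  B `&` Q = set0 -> exists2 eta, 0 < eta & forall u v, B u -> Q v -> eta <= `|u - v|.
Proof.
move=> cB clQ BQ0; apply: contrapT => no_eta.
have close_pair j : exists uv : V * V,
    B uv.1 /\ Q uv.2 /\ `|uv.1 - uv.2| < j.+1%:R^-1.
  apply: contrapT => no_pair; apply: no_eta; exists j.+1%:R^-1; first by rewrite invr_gt0.
  move=> u v Bu Qv; rewrite leNgt; apply/negP => lt_uv; apply: no_pair; by exists (u, v).
have [uv Huv] := choice close_pair.
have [z [Bz near_z]] := compact_frequently_near (S := setT) (y := fun j => (uv j).1) cB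
  (fun K => ex_intro _ K (conj (leqnn K) (conj (Huv K).1 I))).
suff Qz : Q z by have : (B `&` Q) z by []; rewrite BQ0.
apply: clQ => W /nbhs_ballP [e e0 eW].
have e2 : 0 < e / 2 by rewrite divr_gt0.
have [K1 _ small_inv] := near_infty_natSinv_lt (PosNum e2).
have [k [K1k [_ zk]]] := near_z (e / 2) e2 K1.
exists (uv k).2; split; first exact: (Huv k).2.1.
apply: eW; rewrite -ball_normE /=.
apply: le_lt_trans (ler_distD (uv k).1 _ _) _; rewrite [e]splitr ltrD //.
exact: lt_trans (Huv k).2.2 (small_inv k K1k).
Qed.

End SequenceTopology.

Lemma closed_cluster {T : topologicalType} (F : set_system T) : closed (cluster F).
Proof. by rewrite clusterE; apply: closed_bigI => A _; exact: closed_closure. Qed.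

Lemma rV_closed_ball_compact {R : realType} {n : nat} (p : 'rV[R]_n) {s : R} :
  0 < s -> compact [set w | `|p - w| <= s].
Proof.
move=> s0; apply: bounded_closed_compact.
  exists (`|p| + s); split; first exact: num_real.
  move=> M ltM w /= pw; apply/ltW/(le_lt_trans _ ltM).
  by rewrite -[w](subrKC p) (le_trans (ler_normD _ _)) // lerD2l distrC.
by have := @closed_ball_closed _ _ p s; rewrite closed_ballE.
Qed.

Section SufficientDecrease.
Context {R : realType} {n : nat} {f : 'rV[R]_n -> R} {x d : nat -> 'rV[R]_n}
  {t : nat -> R} {L kappa delta m : R} {N : nat}.
Hypotheses (Hx : forall k, x k.+1 = x k + t k *: d k) (Ht : forall k, 0 <= t k)
  (Hm : forall k, m <= f (x k)) (HL : 0 < L) (Hdesc : L_descent f L)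
  (Hsd : forall k, dotp (grad f (x k)) (d k) <= - kappa * enorm (d k) ^+ 2)
  (Hdelta : 0 < delta) (HtN : forall k, (N <= k)%N -> t k <= (2 * kappa - delta) / L).

Lemma sufficient_decrease k : (N <= k)%N ->
  f (x k.+1) <= f (x k) - delta / 2 * (t k * enorm (d k) ^+ 2).
Proof.
move=> Nk; have := Hdesc (x k) (x k.+1).
have -> : x k.+1 - x k = t k *: d k by rewrite Hx addrAC subrr add0r.
rewrite dotpZr enormZ_sqr.
set g := dotp _ _; set e2 := enorm (d k) ^+ 2.
have e2_ge0 : 0 <= e2 by rewrite exprn_ge0 // enorm_ge0.
have Ltk : L * t k <= 2 * kappa - delta.
  by have := HtN k Nk; rewrite ler_pdivlMr // mulrC.
have : t k * g <= t k * (- kappa * e2) by rewrite ler_wpM2l // Hsd.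
have : (L * t k) * (t k * e2) <= (2 * kappa - delta) * (t k * e2).
  by rewrite ler_wpM2r // mulr_ge0.
have -> : L / 2 * (t k ^+ 2 * e2) = (L * t k) * (t k * e2) / 2.
  by rewrite expr2; field.
lra.
Qed.

Lemma telescoped_decrease j :
  delta / 2 * \sum_(N <= k < N + j) t k * enorm (d k) ^+ 2 <= f (x N) - f (x (N + j)%N).
Proof.
elim: j => [|j IH]; first by rewrite addn0 big_geq // subrr mulr0.
rewrite addnS big_nat_recr /= ?leq_addr //.
have := sufficient_decrease _ (leq_addr j N); lra.
Qed.

Lemma weighted_sqr_steps_bounded :
  exists B, forall K, \sum_(0 <= k < K) t k * enorm (d k) ^+ 2 <= B.
Proof.
have a_ge0 k : 0 <= t k * enorm (d k) ^+ 2 by rewrite mulr_ge0 // exprn_ge0 // enorm_ge0.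
exists (\sum_(0 <= k < N) t k * enorm (d k) ^+ 2 + 2 / delta * (f (x N) - m)) => K.
have tail_ge0 : 0 <= 2 / delta * (f (x N) - m).
  by rewrite mulr_ge0 ?subr_ge0 // divr_ge0 // ltW.
have [KN|NK] := leqP K N.
  rewrite (big_cat_nat (leq0n K) KN) /=.
  have : 0 <= \sum_(K <= k < N) t k * enorm (d k) ^+ 2 by apply: sumr_ge0.
  lra.
rewrite (big_cat_nat (leq0n N) (ltnW NK)) /= lerD2l.
have := telescoped_decrease (K - N); rewrite subnKC ?(ltnW NK) //.
set S := \sum_(N <= k < K) _ => decr.
have -> : S = 2 / delta * (delta / 2 * S) by field; rewrite gt_eqF.
apply: ler_wpM2l; first by rewrite divr_ge0 // ltW.
have := Hm K; lra.
Qed.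

End SufficientDecrease.

Lemma gradient_associated_lower_bound {R : realType} {n : nat}
    {f : 'rV[R]_n -> R} {x d : nat -> 'rV[R]_n} (S : set nat) {g : R} :
  gradient_associated f x d -> 0 < g -> (forall k, S k -> g <= enorm (grad f (x k))) ->
  exists2 c, 0 < c & exists K, forall k, (K <= k)%N -> S k -> c <= enorm (d k).
Proof.
move=> ga g0 Sg; apply: contrapT => no_c.
have small_d K : exists k, (K <= k)%N /\ S k /\ enorm (d k) < K.+1%:R^-1.
  apply: contrapT => no_k; apply: no_c; exists K.+1%:R^-1; first by rewrite invr_gt0.
  exists K => k Kk Sk; rewrite leNgt; apply/negP => lt_dk; apply: no_k; by exists k.
have [psi Hpsi] := choice small_d.
have psi_inf : ~ finite_set (range psi).
  by apply: unbounded_nat_infinite => M; exists (psi M); split; [exact: (Hpsi M).1 | exists M].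
have d_cvg0 : cvg0_along (range psi) d.
  move=> e e0; have [K0 _ small_inv] := near_infty_natSinv_lt (PosNum e0).
  exists (\max_(K < K0) psi K).+1 => _ [K _ <-] lt_psiK.
  have K0K : (K0 <= K)%N.
    rewrite leqNgt; apply/negP => KK0.
    have := leq_bigmax (F := fun i : 'I_K0 => psi i) (Ordinal KK0).
    by rewrite /= leqNgt lt_psiK.
  exact: lt_trans (Hpsi K).2.2 (small_inv K K0K).
have [K grad_small] := ga _ psi_inf d_cvg0 g g0.
have := grad_small (psi K) (ex_intro2 _ _ K I erefl) (Hpsi K).1.
by rewrite ltNge Sg //; exact: (Hpsi K).2.1.
Qed.

Lemma cvg_enorm_ge_half {R : realType} {n : nat} {h : 'rV[R]_n -> 'rV[R]_n} {p : 'rV[R]_n} :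
  h @ p --> h p -> exists2 r, 0 < r & forall y, `|p - y| < r -> `|h p| / 2 <= enorm (h y).
Proof.
move=> hp; have [hp0|hp_neq0] := eqVneq (h p) 0.
  by exists 1 => // y _; rewrite hp0 normr0 mul0r enorm_ge0.
have g0 : 0 < `|h p| / 2 by rewrite divr_gt0 // normr_gt0.
have [r r0 ball_p] := (nbhs_ballP _ _).1 ((cvgrPdist_lt _ _).1 hp _ g0).
exists r => // y py.
have /= close : `|h p - h y| < `|h p| / 2 by apply: ball_p; rewrite -ball_normE.
have := ler_normD (h p - h y) (h y); rewrite subrK.
have := normr_le_enorm (h y); lra.
Qed.

Section VanishingSteps.
Context {R : realType} {n : nat} {f : 'rV[R]_n -> R} {x d : nat -> 'rV[R]_n}
  {t : nat -> R}.
Hypotheses (Hx : forall k, x k.+1 = x k + t k *: d k) (Ht : forall k, 0 <= t k)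
  (Htail : forall e, 0 < e -> exists K, forall i j, (K <= i)%N ->
     \sum_(i <= k < j) t k * enorm (d k) ^+ 2 < e).

Local Notation a k := (t k * enorm (d k) ^+ 2).

Lemma step_norm_le k : `|x k.+1 - x k| <= t k * enorm (d k).
Proof.
rewrite Hx addrAC subrr add0r normrZ ger0_norm //.
by rewrite ler_wpM2l // normr_le_enorm.
Qed.

Lemma steps_vanish {T : R} {N : nat} : (forall k, (N <= k)%N -> t k <= T) ->
  forall e, 0 < e -> exists K, forall k, (K <= k)%N -> `|x k.+1 - x k| < e.
Proof.
move=> tT e e0.
have T1 : 0 < `|T| + 1 by have := normr_ge0 T; lra.
have [K0 small] := Htail _ (divr_gt0 (exprn_gt0 2 e0) T1).
exists (maxn K0 N) => k; rewrite geq_max => /andP [K0k Nk].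
have := small k k.+1 K0k; rewrite big_nat1 ltr_pdivlMr // => small_k.
apply: le_lt_trans (step_norm_le k) _.
rewrite -(@ltr_pXn2r _ 2%N) // ?nnegrE ?(ltW e0) ?mulr_ge0 ?enorm_ge0 //.
have -> : (t k * enorm (d k)) ^+ 2 = t k * a k by ring.
apply: le_lt_trans small_k.
rewrite [_ * (`|T| + 1)]mulrC ler_wpM2r ?mulr_ge0 ?exprn_ge0 ?enorm_ge0 //.
by have := tT k Nk; have := ler_norm T; lra.
Qed.

(* Where [c <= enorm (d k)], the step [t k * enorm (d k)] is at most [a k / c], so the
   distance travelled from [x i] is bounded by the tail sum divided by [c]. *)
Lemma iterates_stay_near {p : 'rV[R]_n} {r c : R} {K i : nat} : 0 < c ->
  (forall k, (K <= k)%N -> `|p - x k| < r -> c <= enorm (d k)) ->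
  (K <= i)%N -> `|p - x i| < r / 2 ->
  (forall j, \sum_(i <= k < j) a k < c * r / 4) ->
  forall j, `|p - x (i + j)%N| < r.
Proof.
move=> c0 d_large Ki pi small.
have in_ball j : `|x (i + j)%N - x i| <= (\sum_(i <= k < i + j) a k) / c ->
    `|p - x (i + j)%N| < r.
  move=> near_i; have := ler_distD (x i) p (x (i + j)%N).
  have : (\sum_(i <= k < i + j) a k) / c < r / 4.
    by rewrite ltr_pdivrMr // mulrC mulrA; exact: small.
  move: near_i; rewrite (distrC (x i)).
  set q := (\sum_(i <= k < i + j) a k) / c; have := normr_ge0 (p - x i); lra.
have near_i j : `|x (i + j)%N - x i| <= (\sum_(i <= k < i + j) a k) / c.
  elim: j => [|j IH]; first by rewrite addn0 subrr normr0 big_geq // mul0r.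
  have dc := d_large _ (leq_trans Ki (leq_addr j i)) (in_ball j IH).
  have : t (i + j)%N * enorm (d (i + j)%N) <= a (i + j)%N / c.
    by rewrite ler_pdivlMr // expr2 mulrA ler_wpM2l // mulr_ge0 // enorm_ge0.
  rewrite addnS big_nat_recr ?leq_addr //= mulrDl.
  have := ler_distD (x (i + j)%N) (x (i + j).+1) (x i).
  have := step_norm_le (i + j)%N.
  move: IH; lra.
by move=> j; apply: in_ball.
Qed.

Hypotheses (Hcont : continuous (grad f)) (Hga : gradient_associated f x d)
  (Hunb : forall i B, exists j, B < \sum_(i <= k < i + j) t k).

Lemma cluster_grad_eq0 p : cluster (x @ \oo) p -> grad f p = 0.
Proof.
move=> cp; apply/eqP; apply/negPn/negP => gp_neq0.
have g0 : 0 < `|grad f p| / 2 by rewrite divr_gt0 // normr_gt0.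
have [r r0 grad_large] := cvg_enorm_ge_half (Hcont p).
have [c c0 [K2 d_large]] := gradient_associated_lower_bound
  (fun k => `|p - x k| < r) Hga g0 (fun k => grad_large (x k)).
have [K0 small] := Htail _ (divr_gt0 (mulr_gt0 c0 r0) (ltr0n _ 4)).
have [i [i_large pi]] := (clusterP x p).1 cp (r / 2) (divr_gt0 r0 (ltr0n _ 2)) (maxn K0 K2).
move: i_large; rewrite geq_max => /andP [K0i K2i].
have stay := iterates_stay_near c0 d_large K2i pi (fun j => small i j K0i).
have [j large_sum] := Hunb i (r / (4 * c)).
set S := \sum_(i <= k < i + j) t k in large_sum.
have sum_le : c ^+ 2 * S <= \sum_(i <= k < i + j) a k.
  rewrite mulr_sumr; apply: ler_sum_nat => k /andP [ik _].
  have := stay (k - i)%N; rewrite subnKC // => /(d_large _ (leq_trans K2i ik)) dk.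
  by rewrite mulrC ler_wpM2l // !expr2 ler_pM // ltW.
have := small i (i + j)%N K0i.
move: large_sum; rewrite ltr_pdivrMr ?mulr_gt0 // -(ltr_pM2l c0).
have -> : c * (S * (4 * c)) = 4 * (c ^+ 2 * S) by ring.
move: sum_le; set A := \sum_(i <= k < i + j) a k.
set B := c ^+ 2 * S; set cr := c * r; lra.
Qed.

Lemma grad_cvg0 {tau : R} : 0 < tau -> (forall k, tau <= t k) ->
  (fun k => grad f (x k)) @ \oo --> (0 : 'rV[R]_n).
Proof.
move=> tau0 tau_le.
have d_cvg0 : cvg0_along setT d.
  move=> e e0; have [K0 small] := Htail _ (mulr_gt0 tau0 (exprn_gt0 2 e0)).
  exists K0 => k _ K0k.
  have := small k k.+1 K0k; rewrite big_nat1 => small_k.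
  rewrite -(@ltr_pXn2r _ 2%N) // ?nnegrE ?(ltW e0) ?enorm_ge0 //.
  rewrite -(ltr_pM2l tau0); apply: le_lt_trans small_k.
  by rewrite ler_wpM2r // exprn_ge0 // enorm_ge0.
have grad_cvg0_along := Hga _ infinite_nat d_cvg0.
apply/cvgrPdist_lt => e e0; have [K grad_small] := grad_cvg0_along e e0.
exists K => // k /= Kk; rewrite sub0r normrN.
exact: le_lt_trans (normr_le_enorm _) (grad_small k I Kk).
Qed.

End VanishingSteps.

Section ClusterSet.
Context {R : realType} {n : nat} {y : nat -> 'rV[R]_n}.

Local Notation C := (cluster (y @ \oo)).

Section Bounded.
Context {M : R}.
Hypothesis y_bounded : forall k, `|y k| <= M.

Let E := [set w : 'rV[R]_n | `|0 - w| <= M + 1].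

Let M1_gt0 : 0 < M + 1.
Proof. by have := le_trans (normr_ge0 _) (y_bounded 0); lra. Qed.

Let compact_E : compact E.
Proof. exact: rV_closed_ball_compact _ M1_gt0. Qed.

Let y_in_E k : E (y k).
Proof. by rewrite /E /= sub0r normrN; have := y_bounded k; lra. Qed.

Lemma cluster_nonempty : C !=set0.
Proof.
have [z [_ near_z]] := compact_frequently_near (S := setT) compact_E
  (fun K => ex_intro _ K (conj (leqnn K) (conj (y_in_E K) I))).
exists z; apply/clusterP => e e0 K.
by have [k [Kk [_ zk]]] := near_z e e0 K; exists k.
Qed.

Lemma cluster_compact : compact C.
Proof.
apply: (subclosed_compact _ compact_E); first exact: closed_cluster.
move=> z /clusterP Cz.
have [k [_ zk]] := Cz 1 ltr01 0%N.
have := ler_distD (y k) 0 z; rewrite distrC in zk.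
rewrite /E /= !sub0r !normrN; have := y_bounded k; lra.
Qed.

Lemma eventually_near_cluster e : 0 < e ->
  exists K, forall k, (K <= k)%N -> exists2 z, C z & `|z - y k| < e.
Proof.
move=> e0; apply: contrapT => never_near.
have far K : exists k, (K <= k)%N /\ E (y k) /\
    [set w | forall z, C z -> e <= `|z - w|] (y k).
  apply: contrapT => no_k; apply: never_near; exists K => k Kk.
  apply: contrapT => no_z; apply: no_k; exists k; do 2!split => //.
  move=> z Cz; rewrite leNgt; apply/negP => zk; apply: no_z; by exists z.
have [z [_ near_z]] := compact_frequently_near compact_E far.
have Cz : C z.
  by apply/clusterP => e' e'0 K; have [k [Kk [_ zk]]] := near_z e' e'0 K; exists k.
have [k [_ [far_k zk]]] := near_z e e0 0%N.
by have := far_k z Cz; rewrite leNgt zk.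
Qed.

End Bounded.

Hypothesis steps_vanish : forall e, 0 < e ->
  exists K, forall k, (K <= k)%N -> `|y k.+1 - y k| < e.

Lemma cluster_far_frequently_annulus {p : 'rV[R]_n} {e s : R} : C p ->
  (forall K, exists k, (K <= k)%N /\ e <= `|p - y k|) -> 0 < s -> s <= e ->
  forall K, exists k, (K <= k)%N /\ `|p - y k| <= s /\ s / 2 <= `|p - y k|.
Proof.
move=> Cp far s0 se K.
have s2 : 0 < s / 2 by rewrite divr_gt0.
have [Ks small] := steps_vanish _ s2.
have [i [i_large pi]] := (clusterP y p).1 Cp (s / 2) s2 (maxn K Ks).
move: i_large; rewrite geq_max => /andP [Ki Ksi].
have [j [ij pj]] := far i.
have step k : (i <= k)%N -> `| `|p - y k.+1| - `|p - y k| | < s / 2.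
  move=> ik; apply: le_lt_trans (ler_dist_dist _ _) _.
  by rewrite opprB addrC addrA subrK distrC; exact: small (leq_trans Ksi ik).
have s2j : s / 2 <= `|p - y j| by apply: le_trans pj; lra.
have [k [ik [lo hi]]] := small_steps_crossing ij pi s2j step.
by exists k; split; [exact: leq_trans Ki ik | split => //; lra].
Qed.

Lemma isolated_cluster_cvg p : isolated_in C p -> y @ \oo --> p.
Proof.
move=> [Cp [U [Up CU]]].
have [r r0 rU] := (nbhs_ballP _ _).1 Up.
apply/cvgrPdist_lt => e e0; apply: contrapT => not_near.
have far K : exists k, (K <= k)%N /\ e <= `|p - y k|.
  apply: contrapT => no_k; apply: not_near; exists K => // k /= Kk.
  rewrite ltNge; apply/negP => ek; apply: no_k; by exists k.
pose s := Num.min e (r / 2).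
have s0 : 0 < s by rewrite lt_min e0 divr_gt0.
have se : s <= e by rewrite ge_min lexx.
have sr : s <= r / 2 by rewrite ge_min lexx orbT.
have [z [pz near_z]] := compact_frequently_near (S := [set w | s / 2 <= `|p - w|])
  (rV_closed_ball_compact p s0) (cluster_far_frequently_annulus Cp far s0 se).
have Cz : C z.
  by apply/clusterP => e' e'0 K; have [k [Kk [_ zk]]] := near_z e' e'0 K; exists k.
have Uz : U z by apply: rU; rewrite -ball_normE /=; move: pz => /=; lra.
have : (C `&` U) z by [].
rewrite CU => /= zp; subst z.
have [k [_ [far_k near_k]]] := near_z (s / 2) (divr_gt0 s0 (ltr0n _ 2)) 0%N.
by move: far_k; rewrite /= leNgt near_k.
Qed.

Lemma near_clopen_part_invariant {B U : set 'rV[R]_n} {eta : R} {K : nat} :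
  B = C `&` U -> (forall u v, B u -> (C `&` ~` U) v -> eta <= `|u - v|) ->
  (forall k, (K <= k)%N -> exists2 z, C z & `|z - y k| < eta / 3) ->
  (forall k, (K <= k)%N -> `|y k.+1 - y k| < eta / 3) ->
  forall k, (K <= k)%N ->
  (exists2 u, B u & `|u - y k| < eta / 3) -> exists2 u, B u & `|u - y k.+1| < eta / 3.
Proof.
move=> BCU sep near_C small k Kk [u Bu uk].
have [z Cz zk1] := near_C k.+1 (leqW Kk).
have [Uz|nUz] := pselect (U z); first by exists z => //; rewrite BCU.
have uz : `|u - z| < eta.
  apply: le_lt_trans (ler_distD (y k) u z) _.
  apply: le_lt_trans (lerD (lexx _) (ler_distD (y k.+1) (y k) z)) _.
  have -> : eta = eta / 3 + (eta / 3 + eta / 3) by field.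
  by rewrite (ltrD uk) // distrC ltrD ?small // distrC.
by have := sep u z Bu (conj Cz nUz); rewrite leNgt uz.
Qed.

Lemma cluster_connected {M : R} : (forall k, `|y k| <= M) -> connected C.
Proof.
move=> y_bounded B [p Bp] [U oU BCU] [W cW BCW]; apply: contrapT => B_neq_C.
have BC : B `<=` C by rewrite BCU => w [].
have [q [Cq nBq]] : exists q, C q /\ ~ B q.
  apply: contrapT => all_B; apply: B_neq_C; apply/seteqP; split => // w Cw.
  apply: contrapT => nBw; apply: all_B; by exists w.
pose Q := C `&` ~` U.
have Qq : Q q by split => // Uq; apply: nBq; rewrite BCU.
have cB : compact B.
  by rewrite BCW; apply: compact_closedI => //; exact: cluster_compact y_bounded.
have BQ0 : B `&` Q = set0.
  by apply/seteqP; split => // w [+ [_ nUw]]; rewrite BCU => -[].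
have [eta eta0 sep] := compact_closed_disjoint_dist_gt0 cB
  (closedI (closed_cluster _) (open_closedC oU)) BQ0.
have e3 : 0 < eta / 3 by rewrite divr_gt0.
have [K1 near_C] := eventually_near_cluster y_bounded _ e3.
have [Ks small] := steps_vanish _ e3.
have stays := near_clopen_part_invariant BCU sep
  (fun k K1k => near_C k (leq_trans (leq_maxl K1 Ks) K1k))
  (fun k Ksk => small k (leq_trans (leq_maxr K1 Ks) Ksk)).
have [k0 [k0_large pk0]] := (clusterP y p).1 (BC _ Bp) (eta / 3) e3 (maxn K1 Ks).
have all_near_B j : exists2 u, B u & `|u - y (k0 + j)%N| < eta / 3.
  elim: j => [|j IH]; first by rewrite addn0; exists p.
  by rewrite addnS; apply: stays IH; exact: leq_trans k0_large (leq_addr _ _).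
have [j [k0j qj]] := (clusterP y q).1 Cq (eta / 3) e3 k0.
have [u Bu] := all_near_B (j - k0)%N; rewrite subnKC // => uj.
have uq : `|u - q| < eta.
  apply: le_lt_trans (ler_distD (y j) u q) _.
  have jq : `|y j - q| < eta / 3 by rewrite distrC.
  have -> : eta = eta / 3 + (eta / 3 + eta / 3) by field.
  by apply: ltrD uj (lt_le_trans jq _); rewrite lerDl ltW.
by have := sep u q Bu Qq; rewrite leNgt uq.
Qed.

End ClusterSet.

Theorem mainTheorem3 (R : realType) (n : nat) (f : 'rV[R]_n -> R)
  (x d : nat -> 'rV[R]_n) (t : nat -> R) (L kappa delta : R) (N : nat) :
  C1 f ->
  (forall k, x k.+1 = x k + t k *: d k) ->
  (forall k, 0 <= t k) ->
  (exists m : R, forall k, m <= f (x k)) ->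
  (* (a) *)
  0 < L -> L_descent f L ->
  (* (b) *)
  gradient_associated f x d ->
  0 < kappa ->
  (forall k, dotp (grad f (x k)) (d k) <= - kappa * enorm (d k) ^+ 2) ->
  (* (c) *)
  (fun K => \sum_(1 <= k < K.+1) t k) @ \oo --> +oo ->
  0 < delta -> delta < 2 * kappa ->
  (forall k, (N <= k)%N -> t k <= (2 * kappa - delta) / L) ->
  (* conclusions *)
  (forall p, cluster (x @ \oo) p -> grad f p = 0) /\
  ((exists M : R, forall k, enorm (x k) <= M) ->
     cluster (x @ \oo) !=set0 /\ compact (cluster (x @ \oo)) /\
     connected (cluster (x @ \oo))) /\
  (forall p, isolated_in (cluster (x @ \oo)) p -> x @ \oo --> p) /\
  ((exists tau : R, 0 < tau /\ forall k, tau <= t k) ->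
     (fun k => grad f (x k)) @ \oo --> (0 : 'rV[R]_n)).
Proof.
(* [0 < kappa] and [delta < 2 * kappa] only make the step-size bound in (c) satisfiable,
   and differentiability enters only through the L-descent inequality. *)
move=> [_ grad_cont] Hx Ht [m Hm] HL Hdesc Hga _ Hsd t_div Hdelta _ HtN.
have [B sum_le] := weighted_sqr_steps_bounded Hx Ht Hm HL Hdesc Hsd Hdelta HtN.
have tail := bounded_nneg_sum_tail_lt
  (fun k => mulr_ge0 (Ht k) (exprn_ge0 2 (enorm_ge0 (d k)))) sum_le.
have steps := steps_vanish Hx Ht tail HtN.
split; first exact: cluster_grad_eq0 Hx Ht tail grad_cont Hga
  (divergent_sum_tail_unbounded Ht t_div).
split.
  move=> [M x_le]; have x_bounded k : `|x k| <= M := le_trans (normr_le_enorm _) (x_le k).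
  split; first exact: cluster_nonempty x_bounded.
  split; first exact: cluster_compact x_bounded.
  exact (cluster_connected steps x_bounded).
split; first by move=> p; exact (isolated_cluster_cvg steps p).
by move=> [tau [tau0 tau_le]]; exact (grad_cvg0 tail Hga tau0 tau_le).
Qed.
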